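(* Let $\mathbf{DLat}$ be the class of bounded distributive lattices. Then: (i) $\mathbf{DLat}=\omega_0\mathbf{JD}=\omega_0\mathbf{Frm}$; (ii) for regular cardinals $\lambda\le\kappa$, $\kappa\mathbf{JD}\subseteq\lambda\mathbf{JD}$ and $\kappa\mathbf{Frm}\subseteq\lambda\mathbf{Frm}$, and both inclusions are proper when $\lambda<\kappa$; (iii) $\kappa\mathbf{Frm}\subseteq\kappa\mathbf{JD}$ for every regular $\kappa$, and this inclusion is proper for $\kappa>\omega_0$; (iv) $\mathbf{JID}=\bigcap_\kappa\kappa\mathbf{JD}$ and $\mathbf{Frm}=\bigcap_\kappa\kappa\mathbf{Frm}$, the intersections ranging over all regular cardinals.
   Context: For a regular cardinal $\kappa$, a $\kappa$-join is a join of a set of cardinality $<\kappa$; $\omega_0$ denotes the first infinite cardinal. An existing join $\bigvee S$ in a lattice $A$ is distributive if $a\wedge\bigvee S=\bigvee\{a\wedge s:s\in S\}$ for all $a\in A$. $\kappa\mathbf{JD}$ is the class of bounded distributive lattices in which every existing $\kappa$-join is distributive; $\kappa\mathbf{Frm}$ is the class of bounded distributive lattices in which all $\kappa$-joins exist and are distributive ($\kappa$-frames); $\mathbf{JID}$ is the class of bounded distributive lattices in which every existing join is distributive; $\mathbf{Frm}$ is the class of frames. *)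

From HB Require Import structures.
From mathcomp Require Import all_boot all_order.
From mathcomp Require Import boolp classical_sets functions cardinality.
Set Implicit Arguments. Unset Strict Implicit. Unset Printing Implicit Defensive.
Import Order.TTheory.
Local Open Scope classical_set_scope.
Local Open Scope order_scope.

Definition card_lt T U (A : set T) (B : set U) : Prop :=
  (A #<= B)%card /\ ~ (B #<= A)%card.

(* A type K represents the cardinal |K|.  K is a regular cardinal iff it is
   infinite and K is not the union of fewer than |K| sets each of
   cardinality < |K| (the family is indexed by a subset X of K, which is no
   loss since any index set of size < |K| injects into K). *)
Definition regular_card (K : Type) : Prop :=
  infinite_set (@setT K) /\
  forall (X : set K) (A : K -> set K),
    card_lt X (@setT K) -> (forall i, X i -> card_lt (A i) (@setT K)) ->
    \bigcup_(i in X) A i <> setT.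

Definition is_join d (L : porderType d) (S : set L) (s : L) : Prop :=
  (forall x, S x -> x <= s) /\
  (forall u, (forall x, S x -> x <= u) -> s <= u).

Definition distributive_join d (L : latticeType d) (S : set L) (s : L) : Prop :=
  forall a : L, is_join [set Order.meet a x | x in S] (Order.meet a s).

Definition kJD (K : Type) d (L : tbDistrLatticeType d) : Prop :=
  forall (S : set L) (s : L), card_lt S (@setT K) -> is_join S s ->
    distributive_join S s.

Definition kFrm (K : Type) d (L : tbDistrLatticeType d) : Prop :=
  forall S : set L, card_lt S (@setT K) ->
    exists s : L, is_join S s /\ distributive_join S s.

Definition JID d (L : tbDistrLatticeType d) : Prop :=
  forall (S : set L) (s : L), is_join S s -> distributive_join S s.

Definition Frm d (L : tbDistrLatticeType d) : Prop :=
  forall S : set L, exists s : L, is_join S s /\ distributive_join S s.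

(* A frame condition implies the corresponding JD condition because joins are
   unique, finite joins in a distributive lattice are distributive, and the
   kappa-conditions only get weaker as kappa decreases.  For regular lambda < kappa, the subsets of lambda + 1 of size
   < lambda together with the whole set form a lambda-frame (by regularity),
   yet there the lambda singletons {l} join to the top while each of them meets
   the extra point trivially, so it is not kappa-JD.  The chain omega + omega^op
   is JID, as is every chain, but its initial omega has no join.
   For (iv) one needs a regular cardinal above any set S.  Take U with
   |S|, aleph_0 <= |U| = |U x U| = |U + 1|, well-order the power set of U and
   cut it at the least initial segment K that does not inject into U.  Every
   well-order whose proper initial segments inject into U embeds into K by
   transfinite recursion, since at most |U| values are bounded in K.  Hence U
   injects into K, every subset of K smaller than K injects into U, and K is
   regular because |U x U| = |U|. *)

From HB Require Import structures.
From mathcomp Require Import all_boot all_order.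
From mathcomp Require Import boolp classical_sets functions cardinality wochoice.
From mathcomp Require Import zify.
From Stdlib Require Import Inverse_Image.
Set Implicit Arguments. Unset Strict Implicit. Unset Printing Implicit Defensive.
Import Order.TTheory.

Local Open Scope classical_set_scope.
Local Open Scope card_scope.

(** * Cardinal bounds from injections *)

Lemma set_inj_card_le T U (A : set T) (B : set U) (f : T -> U) :
  set_fun A B f -> set_inj A f -> A #<= B.
Proof.
move=> fAB finj; have [g] : $|{injfun A >-> B}| by apply/injfunPex; exists f.
exact: inj_card_le.
Qed.

Lemma card_le_set_inj T U (u0 : U) (A : set T) (B : set U) :
  A #<= B -> exists2 f : T -> U, set_fun A B f & set_inj A f.
Proof.
pose V : pointedType := HB.pack {classic U} (isPointed.Build {classic U} u0).
by move=> /(@pcard_leP _ V) /injfunPex.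
Qed.

Lemma card_lt_le_trans T U V (S : set T) (A : set U) (B : set V) :
  card_lt S A -> A #<= B -> card_lt S B.
Proof.
move=> [SA nAS] AB; split; first exact: card_le_trans SA AB.
by move=> BS; apply: nAS; exact: card_le_trans AB BS.
Qed.

Lemma card_le_lt_trans T U V (A : set T) (B : set U) (C : set V) :
  A #<= B -> card_lt B C -> card_lt A C.
Proof.
move=> AB [BC nCB]; split; first exact: card_le_trans AB BC.
by move=> CA; apply: nCB; exact: card_le_trans CA AB.
Qed.

Lemma not_card_le_powerset U : ~ ([set: set U] #<= [set: U]).
Proof.
move=> PU; have [u0 _] : [set: U] !=set0.
  apply/set0P/negP => /eqP U0; move: PU; rewrite U0 => /card_le0P.
  by move=> /(congr1 (@^~ set0)) /= <-.
have [f _ finj] := card_le_set_inj u0 PU.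
pose D := [set u | exists2 A, f A = u & ~ A u].
have DfD : ~ D (f D).
  by move=> DfD; case: (DfD) => A /(finj _ _ (in_setT A) (in_setT D)) ->; apply.
by apply: (DfD); exists D.
Qed.

Lemma card_le_bigcup I T U (u0 : U) (X : set I) (F : I -> set T) :
  [set: U * U] #<= [set: U] -> X #<= [set: U] ->
  (forall i, X i -> F i #<= [set: U]) -> \bigcup_(i in X) F i #<= [set: U].
Proof.
move=> UxU_U XU FU; apply: card_le_trans UxU_U.
have [->|/set0P[_ [i0 _ _]]] := eqVneq (\bigcup_(i in X) F i) set0.
  exact: card_ge0.
have [g _ ginj] := card_le_set_inj u0 XU.
have /choice[f finj] : forall i, exists f : T -> U, X i -> set_inj (F i) f.
  move=> i; have [/FU/(card_le_set_inj u0)[f _ finj]|nXi] := pselect (X i).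
    by exists f => _.
  by exists (fun=> u0) => /nXi.
have /choice[idx idxP] : forall x, exists i,
    (\bigcup_(i in X) F i) x -> X i /\ F i x.
  move=> x; have [[i Xi Fix]|nx] := pselect ((\bigcup_(i in X) F i) x).
    by exists i => _.
  by exists i0 => /nx.
apply: (@set_inj_card_le _ _ _ _ (fun x => (g (idx x), f (idx x) x))) => //.
move=> x y /set_mem/idxP[Xx Fx] /set_mem/idxP[Xy Fy] [/ginj idxE].
rewrite -idxE ?in_setE // in Fy *; apply: finj; rewrite ?in_setE //.
Qed.

Lemma card_le_setU1 T U (u0 : U) (A : set T) (a : T) :
  [set: option U] #<= [set: U] -> A #<= [set: U] -> a |` A #<= [set: U].
Proof.
move=> optU_U AU; apply: card_le_trans optU_U.
have [f _ finj] := card_le_set_inj u0 AU.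
pose g x := if pselect (x = a) then None else Some (f x).
apply: (@set_inj_card_le _ _ _ _ g) => // x y /set_mem Ax /set_mem Ay; rewrite /g.
case: pselect => [xa|xa]; case: pselect => [ya|ya].
- by move=> _; rewrite xa ya.
- by [].
- by [].
move=> [fxy]; apply: finj fxy; rewrite in_setE.
  by case: Ax => // /xa.
by case: Ay => // /ya.
Qed.

(** * Well-orderings and regular cardinals *)

Definition well_ordering T (lt : T -> T -> Prop) : Prop :=
  [/\ forall x, ~ lt x x, forall x y z, lt x y -> lt y z -> lt x z,
      forall x y, [\/ lt x y, x = y | lt y x] & well_founded lt].

Lemma well_ordering_exists T : exists lt : T -> T -> Prop, well_ordering lt.
Proof.
suff [lt ltwo] : exists lt : {classic T} -> _ -> Prop, well_ordering lt.
  by exists lt.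
have [R /(withinW (A := predT)) Rwo] := well_ordering_principle {classic T}.
have Rtotal := wo_chainW Rwo; have Rrefl := wo_chain_reflexive Rwo.
have Ranti := wo_chain_antisymmetric Rwo.
have Rmin (A : {pred {classic T}}) :
    nonempty A -> exists m, m \in A /\ {in A, forall x, R m x}.
  by move=> /(Rwo A (fun _ _ => isT)) [m [[Am lbm] _]]; exists m.
exists (fun x y => ~~ R y x); split.
- by move=> x; rewrite Rrefl.
- move=> x y z /negP Ryx /negP Rzy; apply/negP => Rzx.
  have [|m [+ lbm]] := Rmin [mem [:: x; y; z]]; first by exists x; rewrite inE eqxx.
  rewrite !inE => /or3P[] /eqP mE; subst m.
  + have xz : x = z by apply: Ranti; rewrite // Rzx lbm // !inE eqxx !orbT.
    by subst z; apply: Rzy; rewrite lbm // !inE eqxx orbT.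
  + by apply: Ryx; rewrite lbm // inE eqxx.
  + by apply: Rzy; rewrite lbm // !inE eqxx orbT.
- move=> x y; have [->|nxy] := eqVneq x y; first by constructor 2.
  have /orP[Rxy|Ryx] := Rtotal x y isT isT.
    by constructor 1; apply/negP => Ryx; rewrite (Ranti x y) ?Rxy ?Ryx ?eqxx in nxy.
  by constructor 3; apply/negP => Rxy; rewrite (Ranti x y) ?Rxy ?Ryx ?eqxx in nxy.
- move=> x; apply: contrapT => nacc.
  have [|m [+ lbm]] := Rmin [pred y | `[< ~ Acc (fun a b => ~~ R b a) y >]].
    by exists x; rewrite inE.
  rewrite inE; apply; constructor => y /negP Rmy.
  by apply: contrapT => nacc'; apply: Rmy; rewrite lbm // inE.
Qed.

Lemma well_ordering_inj T V (f : T -> V) (lt : V -> V -> Prop) :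
  injective f -> well_ordering lt -> well_ordering (fun x y => lt (f x) (f y)).
Proof.
move=> finj [irr tr tri wf]; split.
- by move=> x; apply: irr.
- by move=> x y z; apply: tr.
- by move=> x y; case: (tri (f x) (f y)) => [?|/finj->|?]; constructor.
- exact: wf_inverse_image.
Qed.

Lemma well_founded_min T (lt : T -> T -> Prop) (P : T -> Prop) x :
  well_founded lt -> P x -> exists m, P m /\ forall y, P y -> ~ lt y m.
Proof.
move=> wf Px; apply: contrapT => nomin; elim: (wf x) Px => y _ IH Py.
by apply: nomin; exists y; split => // z Pz /IH; apply.
Qed.

Section SuccessorCardinal.
Variables (U : Type) (u0 : U) (K : Type) (ltK : K -> K -> Prop).
Hypotheses (UxU_le_U : [set: U * U] #<= [set: U])
  (optionU_le_U : [set: option U] #<= [set: U]).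
Hypothesis ltK_wo : well_ordering ltK.
Hypothesis segment_le_U : forall k, [set k' | ltK k' k] #<= [set: U].
Hypothesis K_not_le_U : ~ ([set: K] #<= [set: U]).

Lemma card_le_bounded (Z : set K) :
  Z #<= [set: U] -> exists k, forall z, Z z -> ltK z k.
Proof.
move=> ZU; apply: contrapT => unbounded; apply: K_not_le_U.
have ZsegU : \bigcup_(z in Z) (z |` [set k | ltK k z]) #<= [set: U].
  by apply: card_le_bigcup ZU _ => // z _; exact: card_le_setU1.
apply: card_le_trans ZsegU; apply: subset_card_le => k _.
apply: contrapT => nk; apply: unbounded; exists k => z Zz.
have [_ _ tri _] := ltK_wo.
by case: (tri z k) => // [zk|kz]; exfalso; apply: nk; exists z => //; [left|right].
Qed.

Lemma well_ordering_card_le (Y : Type) (ltY : Y -> Y -> Prop) (B : set K) :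
  well_ordering ltY -> (forall y, [set y' | ltY y' y] #<= [set: U]) ->
  (forall Z, Z #<= [set: U] -> exists2 b, B b & forall z, Z z -> ltK z b) ->
  [set: Y] #<= B.
Proof.
move=> [_ _ triY wfY] segY_U ubB; have [irrK _ _ _] := ltK_wo.
have [k0 _ _] := ubB set0 (card_ge0 _ _).
have /choice[ub ubP] : forall Z, exists b,
    Z #<= [set: U] -> B b /\ forall z, Z z -> ltK z b.
  move=> Z; have [/ubB[b Bb Zb]|nZ] := pselect (Z #<= [set: U]).
    by exists b.
  by exists k0 => /nZ.
(* f y is a strict upper bound in B of all the earlier values f y', y' < y. *)
pose f := Fix wfY (fun=> K)
  (fun y rec => ub [set k | exists y' (lt : ltY y' y), rec y' lt = k]).
have fE y : f y = ub (f @` [set y' | ltY y' y]).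
  rewrite /f Fix_eq => [|{}y g h gh]; last first.
    by congr ub; apply/seteqP; split=> k [y' [lt <-]]; exists y', lt.
  congr ub; apply/seteqP; split=> k; first by case=> y' [lt <-]; exists y'.
  by case=> y' lt <-; exists y', lt.
have fP y : B (f y) /\ forall y', ltY y' y -> ltK (f y') (f y).
  rewrite fE; have [] := ubP _ (card_le_trans (card_image_le f _) (segY_U y)).
  by move=> By ub_y; split => // y' lt; apply: ub_y; exists y'.
apply: (@set_inj_card_le _ _ _ _ f) => [y _|x y _ _ fxy]; first by case: (fP y).
case: (triY x y) => // lt; [have := (fP y).2 x lt | have := (fP x).2 y lt];
  by rewrite fxy => /irrK.
Qed.

Lemma card_le_of_lt_succ (Z : set K) : ~ ([set: K] #<= Z) -> Z #<= [set: U].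
Proof.
move=> KZ; apply: contrapT => ZU; apply: KZ.
apply: well_ordering_card_le ltK_wo segment_le_U _ => W /card_le_bounded[k Wk].
have [_ tr tri _] := ltK_wo.
have [z Zz zk] : exists2 z, Z z & ~ (k |` [set k' | ltK k' k]) z.
  apply: contrapT => Zk; apply: ZU.
  have kU : k |` [set k' | ltK k' k] #<= [set: U] by exact: card_le_setU1.
  apply: card_le_trans kU; apply: subset_card_le => z Zz.
  by apply: contrapT => zk; apply: Zk; exists z.
exists z => // w /Wk wk; apply: tr wk _.
by case: (tri z k) => [zk'|zk'|//]; exfalso; apply: zk; [right|left].
Qed.

Hypothesis nat_le_U : [set: nat] #<= [set: U].

Lemma regular_card_succ : regular_card K.
Proof.
split=> [/finite_set_countable KN|X A [_ KX] A_small UA].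
  by apply: K_not_le_U; exact: card_le_trans KN nat_le_U.
apply: K_not_le_U; rewrite -UA.
apply: card_le_bigcup (card_le_of_lt_succ KX) _ => // i /A_small[_ KAi].
exact: card_le_of_lt_succ.
Qed.

Lemma card_le_succ : [set: U] #<= [set: K].
Proof.
have [ltU ltU_wo] := well_ordering_exists U.
apply: well_ordering_card_le ltU_wo _ _ => [u|Z /card_le_bounded[k Zk]].
  exact: card_leT.
by exists k.
Qed.

End SuccessorCardinal.

Lemma exists_succ_well_ordering U V : ~ ([set: V] #<= [set: U]) ->
  exists (K : Type) (ltK : K -> K -> Prop), [/\ well_ordering ltK,
    forall k, [set k' | ltK k' k] #<= [set: U] & ~ ([set: K] #<= [set: U])].
Proof.
move=> VU; have [ltV ltV_wo] := well_ordering_exists V.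
have [irrV trV triV wfV] := ltV_wo.
pose large b := ~ ([set v | ltV v b] #<= [set: U]).
(* The initial segment below the least large element, or V if there is none. *)
pose Kp := [set v | forall b, large b -> ltV v b].
have Kp_large : ~ (Kp #<= [set: U]).
  have [[b0 b0l]|nolarge] := pselect (exists b, large b); last first.
    suff -> : Kp = setT by [].
    by apply/seteqP; split=> // v _ b bl; exfalso; apply: nolarge; exists b.
  have [a [al amin]] := well_founded_min wfV b0l.
  apply: contra_not al; apply: card_le_trans; apply: subset_card_le => v va b bl'.
  by case: (triV a b) => [|<-|/(amin _ bl')] //; exact: trV.
exists Kp, (fun x y : Kp => ltV (val x) (val y)); split.
- exact: well_ordering_inj val_inj ltV_wo.
- move=> k; have /contrapT : ~ large (val k) by move=> /(set_valP k) /irrV.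
  apply: card_le_trans; apply: (@set_inj_card_le _ _ _ _ val) => // x y _ _.
  exact: val_inj.
- move=> KU; apply: Kp_large; apply: card_le_trans KU.
  by have /card_eqPle[] := card_setT_sym Kp.
Qed.

Lemma exists_absorbing_type T : exists U : Type, exists u0 : U,
  [/\ [set: U * U] #<= [set: U], [set: option U] #<= [set: U],
      [set: nat] #<= [set: U] & [set: T] #<= [set: U]].
Proof.
exists (nat -> nat + T), (fun=> inl 0%N); split.
- apply: (@set_inj_card_le _ _ _ _
    (fun uv n => if odd n then uv.1 n./2 else uv.2 n./2)) => // -[u v] [u' v'] _ _ e.
  congr pair; apply/funext => n.
    by have := congr1 (@^~ n.*2.+1) e; rewrite /= odd_double uphalf_double.
  by have := congr1 (@^~ n.*2) e; rewrite /= odd_double doubleK.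
- apply: (@set_inj_card_le _ _ _ _
    (fun ou n => if ou is Some u then if n is n'.+1 then u n' else inl 1%N
                 else inl 0%N)) => // -[u|] [v|] _ _ //= e.
  + by congr Some; apply/funext => n; have := congr1 (@^~ n.+1) e.
  + by have := congr1 (@^~ 0%N) e.
  + by have := congr1 (@^~ 0%N) e.
- apply: (@set_inj_card_le _ _ _ _ (fun n _ => inl n)) => // m n _ _ e.
  by have [] := congr1 (@^~ 0%N) e.
- apply: (@set_inj_card_le _ _ _ _ (fun t _ => inr t)) => // s t _ _ e.
  by have [] := congr1 (@^~ 0%N) e.
Qed.

Lemma exists_regular_card_gt T (S : set T) :
  exists K : Type, regular_card K /\ card_lt S [set: K].
Proof.
have [U [u0 [UxU_U optU_U nat_U T_U]]] := exists_absorbing_type T.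
have [K [ltK [ltK_wo segK_U K_U]]] :=
  exists_succ_well_ordering (@not_card_le_powerset U).
have U_K := card_le_succ u0 UxU_U optU_U ltK_wo segK_U K_U.
have S_U : S #<= [set: U] := card_le_trans (card_leT S) T_U.
have regK := regular_card_succ u0 UxU_U optU_U ltK_wo segK_U K_U nat_U.
exists K; split; first exact regK.
by split; [exact: card_le_trans S_U U_K | move=> /card_le_trans/(_ S_U)].
Qed.

Local Open Scope order_scope.

(** * Distributivity of joins *)

Section Joins.
Variables (d : Order.disp_t) (L : tbDistrLatticeType d).

Lemma is_join_unique (S : set L) s s' : is_join S s -> is_join S s' -> s = s'.
Proof. by move=> [ub lub] [ub' lub']; apply: le_anti; rewrite lub ?lub'. Qed.

Lemma kFrm_kJD K : kFrm K L -> kJD K L.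
Proof.
move=> frmL S s SK js; have [s' [js' ds']] := frmL S SK.
by rewrite (is_join_unique js js').
Qed.

Lemma kJD_card_le K Λ : [set: Λ] #<= [set: K] -> kJD K L -> kJD Λ L.
Proof. by move=> ΛK jdL S s SΛ; apply: jdL; exact: card_lt_le_trans SΛ ΛK. Qed.

Lemma kFrm_card_le K Λ : [set: Λ] #<= [set: K] -> kFrm K L -> kFrm Λ L.
Proof. by move=> ΛK frmL S SΛ; apply: frmL; exact: card_lt_le_trans SΛ ΛK. Qed.

Lemma is_join_seq (X : seq L) : is_join [set` X] (\join_(x <- X) x).
Proof.
split=> [x /= xX|u ubu]; first exact: (@joins_sup_seq _ _ _ X xpredT id x xX).
by apply/joinsP_seq => x xX _; apply: ubu.
Qed.

Lemma kFrm_nat : kFrm nat L.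
Proof.
move=> S [_ /finite_setPn /(finite_seqP S).1 [X ->]].
exists (\join_(x <- X) x); split=> [|a]; first exact: is_join_seq.
rewrite (big_morph _ (meetUr a) (meetx0 a)) -(big_map (Order.meet a) xpredT id).
have -> : [set a `&` x | x in [set` X]] = [set` map (Order.meet a) X].
  apply/seteqP; split=> [_ [x xX <-]|y /= /mapP[x xX ->]]; first exact: map_f.
  by exists x.
exact: is_join_seq.
Qed.

Lemma is_join_top (S : set L) :
  S \top -> is_join S \top /\ distributive_join S \top.
Proof.
move=> St; split=> [|a]; first by split=> [x _|u /(_ _ St)]; rewrite ?lex1.
rewrite meetx1; split=> [_ [x _ <-]|u ubu]; first exact: leIl.
by apply: ubu; exists \top; rewrite ?meetx1.
Qed.

End Joins.

Lemma order_JID d (L : tbOrderType d) : JID L.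
Proof.
move=> S s [ub lub] a; split=> [_ [x Sx <-]|u ubu]; first by rewrite leI2 ?ub.
have [au|ua] := boolP (a <= u); first exact: le_trans (leIl _ _) au.
suff /lub su : forall x, S x -> x <= u by exact: le_trans (leIr _ _) su.
by move=> x Sx; have := ubu _ (ex_intro2 _ _ x Sx erefl); rewrite leIx (negbTE ua).
Qed.

Lemma JID_iff_kJD d (L : tbDistrLatticeType d) :
  JID L <-> forall K : Type, regular_card K -> kJD K L.
Proof.
split=> [jidL K _ S s _ js|jdL S s]; first exact: jidL.
by have [K [regK SK]] := exists_regular_card_gt S; exact (jdL K regK S s SK).
Qed.

Lemma Frm_iff_kFrm d (L : tbDistrLatticeType d) :
  Frm L <-> forall K : Type, regular_card K -> kFrm K L.
Proof.
split=> [frmL K _ S _|frmL S]; first exact: frmL.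
by have [K [regK SK]] := exists_regular_card_gt S; exact (frmL K regK S SK).
Qed.

(** * The separating lattices *)

Fact gap_chain_display : Order.disp_t. Proof. exact: Order.Disp tt tt. Qed.

(* The chain 0 < 2 < 4 < ... < ... < 5 < 3 < 1, of order type omega + omega^op. *)
Definition gap_chain := nat.
HB.instance Definition _ := Choice.on gap_chain.

Definition gap_le (m n : gap_chain) : bool :=
  if odd m then odd n && (n./2 <= m./2)%N else odd n || (m <= n)%N.

Lemma gap_le_refl : reflexive gap_le.
Proof. by move=> m; rewrite /gap_le; case: ifP => ->; rewrite ?leqnn ?orbT. Qed.

Lemma gap_le_anti : antisymmetric gap_le.
Proof.
move=> m n; rewrite /gap_le -[m]odd_double_half -[n]odd_double_half.
by case: (odd m); case: (odd n); rewrite /= ?odd_double /=; lia.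
Qed.

Lemma gap_le_trans : transitive gap_le.
Proof.
move=> n m p; rewrite /gap_le.
by case: (boolP (odd m)); case: (boolP (odd n)); case: (boolP (odd p)) => /=; lia.
Qed.

Lemma gap_le_total : total gap_le.
Proof.
move=> m n; rewrite /gap_le.
by case: (boolP (odd m)); case: (boolP (odd n)) => /=; lia.
Qed.

HB.instance Definition _ := Order.Le_isPOrder.Build gap_chain_display gap_chain
  gap_le_refl gap_le_anti gap_le_trans.
HB.instance Definition _ :=
  Order.POrder_isTotal.Build gap_chain_display gap_chain gap_le_total.

Lemma gap_le0x (n : gap_chain) : gap_le 0%N n.
Proof. by rewrite /gap_le /=; case: (odd n). Qed.

Lemma gap_lex1 (n : gap_chain) : gap_le n 1%N.
Proof. by rewrite /gap_le /=; case: (odd n). Qed.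

HB.instance Definition _ :=
  Order.hasBottom.Build gap_chain_display gap_chain gap_le0x.
HB.instance Definition _ :=
  Order.hasTop.Build gap_chain_display gap_chain gap_lex1.

Lemma gap_leE (m n : gap_chain) : (m <= n) = gap_le m n. Proof. by []. Qed.

Lemma gap_chain_evens_no_join :
  ~ exists s : gap_chain, is_join [set n : gap_chain | ~~ odd n] s.
Proof.
move=> [s [ub lub]]; have [os|es] := boolP (odd s).
  have : s <= (s.+2 : gap_chain).
    by apply: lub => n /= en; rewrite gap_leE /gap_le (negbTE en) /= os.
  by rewrite gap_leE /gap_le /= os; have := odd_double_half s; rewrite os; lia.
have : (s.+2 : gap_chain) <= s by apply: ub; rewrite /= negbK.
by rewrite gap_leE /gap_le /= (negbTE es) /=; lia.
Qed.

Lemma finite_card_lt T U (A : set T) :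
  infinite_set [set: U] -> finite_set A -> card_lt A [set: U].
Proof.
move=> infU finA; split.
  exact: card_le_trans (finite_set_countable finA) ((infiniteP _).1 infU).
by move=> /card_le_finite/(_ finA).
Qed.

Lemma regular_card_bigcup Λ J T (X : set J) (F : J -> set T) : regular_card Λ ->
  card_lt X [set: Λ] -> (forall i, X i -> ~ ([set: Λ] #<= F i)) ->
  ~ ([set: Λ] #<= \bigcup_(i in X) F i).
Proof.
move=> [infΛ regΛ] [XΛ ΛX] F_small ΛF.
have [l0 _] := infinite_setN0 infΛ.
have [t0 _] : (\bigcup_(i in X) F i) !=set0.
  apply/set0P/negP => /eqP F0; move: ΛF; rewrite F0 => /card_le0P.
  by move=> /(congr1 (@^~ l0)) /= <-.
have [g _ ginj] := card_le_set_inj l0 XΛ.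
have [f fF finj] := card_le_set_inj t0 ΛF.
(* Pulling the pieces F i back along f and reindexing them by g covers Λ by
   fewer than |Λ| sets each smaller than Λ. *)
pose A j := [set l | exists2 i, X i & g i = j /\ F i (f l)].
apply: (regΛ (g @` X) A).
- split; first exact: card_leT.
  by move=> /card_le_trans/(_ (card_image_le g X)).
- move=> _ [i Xi <-]; split; first exact: card_leT.
  move=> /card_le_trans ΛA; apply: (F_small i Xi); apply: ΛA.
  apply: (@set_inj_card_le _ _ _ _ f) => [l [i' Xi' [/ginj gi' Fi']]|].
    by rewrite -gi' ?in_setE.
  by move=> l l' _ _ /finj; apply; rewrite in_setT.
- apply/seteqP; split=> // l _; have [i Xi Fi] := fF l I.
  by exists (g i); [exists i | exists i].
Qed.

Section SmallOrFull.
Variables (Λ : Type) (regΛ : regular_card Λ).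

Definition small_or_full : pred (set (option Λ)) :=
  fun A => `[< ~ ([set: Λ] #<= A) \/ A = setT >].

Lemma small_subset (A B : set (option Λ)) :
  A `<=` B -> ~ ([set: Λ] #<= B) -> ~ ([set: Λ] #<= A).
Proof. by move=> AB + ΛA; apply; exact: card_le_trans ΛA (subset_card_le AB). Qed.

Lemma small_finite (A : set (option Λ)) : finite_set A -> ~ ([set: Λ] #<= A).
Proof. by move=> finA; have [] := finite_card_lt (proj1 regΛ) finA. Qed.

Lemma small_setU (A B : set (option Λ)) :
  ~ ([set: Λ] #<= A) -> ~ ([set: Λ] #<= B) -> ~ ([set: Λ] #<= A `|` B).
Proof.
move=> sA sB; rewrite -bigcup2inE; apply: regular_card_bigcup regΛ _ _.
  exact: finite_card_lt (proj1 regΛ) (finite_II 2).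
by case=> [|[|i]] // /= /[!ltnS] /[!ltn0].
Qed.

Lemma small_or_full_meet : meet_closed small_or_full.
Proof.
move=> A B; rewrite !inE meetEset => -[sA|->] sB; last by rewrite setTI.
by left; apply: small_subset sA; exact: subIsetl.
Qed.

Lemma small_or_full_join : join_closed small_or_full.
Proof.
move=> A B; rewrite !inE joinEset => -[sA|->] [sB|->]; rewrite ?setTU ?setUT;
  by [left; exact: small_setU | right].
Qed.

Lemma small_or_full0 : \bot \in small_or_full.
Proof. by rewrite inE; left; apply: small_finite; exact: finite_set0. Qed.

Lemma small_or_full1 : \top \in small_or_full.
Proof. by rewrite inE; right. Qed.

Fact small_or_full_display : Order.disp_t. Proof. exact: Order.Disp tt tt. Qed.

(* Small sets are closed under binary unions only for regular Λ, so the type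
   takes the regularity proof as an argument to carry the lattice instances. *)
Definition small_or_full_lattice (_ : regular_card Λ) := {A | small_or_full A}.

HB.instance Definition _ :=
  SubChoice.copy (small_or_full_lattice regΛ) {A | small_or_full A}.
HB.instance Definition _ := Order.SubChoice_isTBSubLattice.Build _ _ _
  small_or_full_display (small_or_full_lattice regΛ)
  small_or_full_meet small_or_full_join small_or_full0 small_or_full1.

Lemma small_or_full_meetUl :
  left_distributive (@Order.meet _ (small_or_full_lattice regΛ)) Order.join.
Proof. by move=> A B C; apply: val_inj => /=; rewrite meetUl. Qed.

HB.instance Definition _ := Order.Lattice_Meet_isDistrLattice.Build
  small_or_full_display (small_or_full_lattice regΛ) small_or_full_meetUl.

Local Notation L := (small_or_full_lattice regΛ).

Lemma small_or_full_leP (A B : L) : reflect (val A `<=` val B) (A <= B).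
Proof. by rewrite -Order.le_val; exact: subsetPset. Qed.

Lemma small_or_full_kFrm : kFrm Λ L.
Proof.
move=> S SΛ; have [St|Snt] := pselect (S \top).
  by exists \top; exact: is_join_top.
have S_small A : S A -> ~ ([set: Λ] #<= val A).
  move=> SA; have := valP A; rewrite inE => -[//|AT].
  by exfalso; apply: Snt; have -> : \top = A by apply: val_inj.
pose W := \bigcup_(A in S) val A.
have W_small : ~ ([set: Λ] #<= W) by exact: regular_card_bigcup.
have W_L : small_or_full W by rewrite inE; left.
exists (Sub W W_L); split=> [|a].
  split=> [A SA|u ubu]; apply/small_or_full_leP; rewrite SubK.
    by move=> y; exists A.
  by move=> y [A SA Ay]; have /small_or_full_leP := ubu A SA; apply.
split=> [_ [A SA <-]|u ubu]; apply/small_or_full_leP => /=; rewrite !meetEset.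
  by move=> y [ay Ay]; split=> //; exists A.
move=> y [ay [A SA Ay]].
by have /small_or_full_leP := ubu _ (ex_intro2 _ _ A SA erefl); apply.
Qed.

Lemma small_or_full_not_kJD K : card_lt [set: Λ] [set: K] -> ~ kJD K L.
Proof.
move=> [ΛK KΛ] jdL.
have single_L (o : option Λ) : small_or_full [set o].
  by rewrite inE; left; apply: small_finite; exact: finite_set1.
pose single (o : option Λ) : L := Sub [set o] (single_L o).
pose S := [set single (Some l) | l in [set: Λ]].
have SK : card_lt S [set: K].
  split; first exact: card_le_trans (card_image_le _ _) ΛK.
  by move=> /card_le_trans/(_ (card_image_le _ _)).
have S_top : is_join S \top.
  split=> [A _|u ubu]; first exact: lex1.
  have := valP u; rewrite inE => -[u_small|uT].
    exfalso; apply: u_small; apply: (@set_inj_card_le _ _ _ _ Some) => [l _|].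
      by have /small_or_full_leP := ubu _ (ex_intro2 _ _ l I erefl); apply.
    by move=> l l' _ _ [].
  by apply/small_or_full_leP; rewrite uT.
have [_ lub] := jdL S \top SK S_top (single None).
have /small_or_full_leP : single None `&` \top <= \bot.
  apply: lub => _ [_ [l _ <-] <-]; apply/small_or_full_leP => /=.
  by rewrite meetEset => o [/= -> ].
by rewrite meetx1 => /(_ None erefl).
Qed.

End SmallOrFull.

Theorem theorem4p1 :
  (* (i) DLat = omega0 JD = omega0 Frm *)
  (forall (d : Order.disp_t) (L : tbDistrLatticeType d),
      kJD nat L /\ kFrm nat L) /\
  (* (ii) *)
  (forall (K Λ : Type), regular_card K -> regular_card Λ ->
     ((@setT Λ #<= @setT K)%card ->
        forall (d : Order.disp_t) (L : tbDistrLatticeType d),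
          (kJD K L -> kJD Λ L) /\ (kFrm K L -> kFrm Λ L)) /\
     (card_lt (@setT Λ) (@setT K) ->
        (exists (d : Order.disp_t) (L : tbDistrLatticeType d),
            kJD Λ L /\ ~ kJD K L) /\
        (exists (d : Order.disp_t) (L : tbDistrLatticeType d),
            kFrm Λ L /\ ~ kFrm K L))) /\
  (* (iii) *)
  (forall K : Type, regular_card K ->
     (forall (d : Order.disp_t) (L : tbDistrLatticeType d), kFrm K L -> kJD K L) /\
     (card_lt (@setT nat) (@setT K) ->
        exists (d : Order.disp_t) (L : tbDistrLatticeType d),
          kJD K L /\ ~ kFrm K L)) /\
  (* (iv) *)
  (forall (d : Order.disp_t) (L : tbDistrLatticeType d),
     (JID L <-> forall K : Type, regular_card K -> kJD K L) /\
     (Frm L <-> forall K : Type, regular_card K -> kFrm K L)).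
Proof.
split; [|split; [|split]].
- by move=> d L; split; [apply: kFrm_kJD|]; exact: kFrm_nat.
- move=> K Λ regK regΛ; split=> [ΛK d L|ΛK].
    by split; [exact: kJD_card_le | exact: kFrm_card_le].
  split; exists small_or_full_display, (small_or_full_lattice regΛ).
    by split; [exact/kFrm_kJD/small_or_full_kFrm | exact: small_or_full_not_kJD].
  split; first exact: small_or_full_kFrm.
  by move/kFrm_kJD; exact: small_or_full_not_kJD.
- move=> K regK; split=> [d L|NK]; first exact: kFrm_kJD.
  exists gap_chain_display, gap_chain; split=> [S s _|frmL]; first exact: order_JID.
  have [s [js _]] :=
    frmL [set n : gap_chain | ~~ odd n] (card_le_lt_trans (card_leT _) NK).
  by apply: gap_chain_evens_no_join; exists s.
- by move=> d L; split; [exact: JID_iff_kJD | exact: Frm_iff_kFrm].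
Qed.
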